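(* Let $\alpha=2\sqrt7-4$. For every $\varepsilon>0$ and every balanced tetrahedral erasure channel $W$ with $Q(W)>0$, there exists an integer $m>0$ such that for all $n\ge m$, every $n$th-generation descendant $W'$ of $W$ satisfies $Q(W')\ge\alpha-\varepsilon$ (i.e. $Q(W_n)\ge\alpha-\varepsilon$ for all $n\ge m$).
   Context: $\mathrm{TEC}(p,q,r,s,t)$ denotes a tetrahedral erasure channel with parameters $p,q,r,s,t\ge0$ summing to $1$. Its entropy is $H=\frac{q+r+s}{2}+t$, its edge mass is $E=q+r+s$, and its Quetelet index is $Q=E/(H(1-H))$ (defined when $0<H<1$). It is balanced if $q=r=s$. For $W=\mathrm{TEC}(p,q,r,s,t)$, the serial child is $W^{s}=\mathrm{TEC}(p^2,\ ps+sq+qp,\ pq+qr+rp,\ pr+rs+sp,\ 1-\text{(sum of the other four)})$ and the parallel child is $W^{p}=\mathrm{TEC}(1-\text{(sum of the other four)},\ ts+sq+qt,\ tq+qr+rt,\ tr+rs+st,\ t^2)$. The $0$th-generation descendant of $W$ is $W$; the $n$th-generation descendants are the children of the $(n-1)$th-generation descendants; $W_n$ denotes a random $n$th-generation descendant. *)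

From mathcomp Require Import all_boot all_order all_algebra.
From mathcomp Require Import reals.
Set Implicit Arguments. Unset Strict Implicit. Unset Printing Implicit Defensive.
Import Order.TTheory GRing.Theory Num.Theory.
Local Open Scope ring_scope.

Section TECdefs.
Variable R : realType.

Record tec := TEC { tp : R; tq : R; tr : R; ts : R; tt : R }.

Definition valid_tec (W : tec) : Prop :=
  0 <= tp W /\ 0 <= tq W /\ 0 <= tr W /\ 0 <= ts W /\ 0 <= tt W /\
  tp W + tq W + tr W + ts W + tt W = 1.

Definition tec_H (W : tec) : R := (tq W + tr W + ts W) / 2 + tt W.
Definition tec_E (W : tec) : R := tq W + tr W + ts W.
(* Quetelet index; only meaningful when 0 < H < 1 *)
Definition tec_Q (W : tec) : R := tec_E W / (tec_H W * (1 - tec_H W)).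

Definition balanced (W : tec) : Prop := tq W = tr W /\ tr W = ts W.

Definition serial_child (W : tec) : tec :=
  let: TEC p q r s t := W in
  let p' := p ^+ 2 in
  let q' := p * s + s * q + q * p in
  let r' := p * q + q * r + r * p in
  let s' := p * r + r * s + s * p in
  TEC p' q' r' s' (1 - (p' + q' + r' + s')).

Definition parallel_child (W : tec) : tec :=
  let: TEC p q r s t := W in
  let q' := t * s + s * q + q * t in
  let r' := t * q + q * r + r * t in
  let s' := t * r + r * s + s * t in
  let t' := t ^+ 2 in
  TEC (1 - (q' + r' + s' + t')) q' r' s' t'.

Inductive descendant (W : tec) : nat -> tec -> Prop :=
  | desc0 : descendant W 0 W
  | descS : forall n V, descendant W n V -> descendant W n.+1 (serial_child V)
  | descP : forall n V, descendant W n V -> descendant W n.+1 (parallel_child V).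

End TECdefs.

From mathcomp Require Import all_boot all_order all_algebra.
From mathcomp Require Import reals ring lra.
Import Order.TTheory GRing.Theory Num.Theory.
Local Open Scope ring_scope.
Set Implicit Arguments. Unset Strict Implicit.

(* Write a balanced channel through a = 1 - H and e = E, so that Q = e / (a (1 - a)); the
   serial child is (a, e) |-> (a^2 - e^2/12, 2ae - 2e^2/3) and the parallel child is its
   conjugate under a |-> 1 - a.  With u = e/a = Q H and v = e/(1-a) = Q (1 - H) one has
   Q = u + v, and the index of the serial child is a rational function of (u, v) that is at
   least min(Q, alpha), and at least Q + gap(Q) u / 36 while Q <= alpha, where
   gap(Q) = 12 - 8Q - Q^2 = (alpha - Q)(alpha + 8 + Q).  So an index theta < alpha, once
   reached, is kept forever, and below theta every step multiplies Q by 1 + gap(theta)/216,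
   except possibly when min(H, 1 - H) < 1/6, in which case min(H, 1 - H) grows by the factor
   3/2 or passes 1/6.  As min(H, 1 - H) >= 3q/2 and q at worst squares from one generation to
   the next, runs of such slow steps have bounded length, so after boundedly many generations
   every descendant has Q >= theta. *)

Lemma bernoulli_ineq (R : realFieldType) (d : R) n : 0 <= d -> 1 + n%:R * d <= (1 + d) ^+ n.
Proof.
move=> d0; elim: n => [|n IH]; first by rewrite mul0r addr0 expr0.
rewrite exprS -natr1.
have : (1 + d) * (1 + n%:R * d) <= (1 + d) * (1 + d) ^+ n by apply: ler_wpM2l => //; lra.
have : 0 <= n%:R * d * d by rewrite mulr_ge0 ?mulr_ge0.
lra.
Qed.

Lemma expr_unbounded (R : archiRealFieldType) (x y : R) : 1 < x -> exists n, y <= x ^+ n.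
Proof.
move=> x1; pose d := x - 1; have d0 : 0 < d by rewrite subr_gt0.
pose n := Num.bound (`|y| / d); exists n.
have /ltW hn : `|y| / d < n%:R by apply: archi_boundP; rewrite divr_ge0 // ltW.
rewrite ler_pdivrMr // in hn.
have := bernoulli_ineq n (ltW d0); rewrite subrKC.
have := ler_norm y; lra.
Qed.

Section SerialQuetelet.
Variable R : realFieldType.

Definition gap (x : R) : R := 12 - 8 * x - x ^+ 2.

(* The index of the serial child of (a, e) is ser_num u v / ser_den u v with u = e/a and
   v = e/(1-a); see quet_ser. *)
Definition ser_num (u v : R) : R := 2 * (u + v) ^+ 2 * (1 - u / 3).
Definition ser_den (u v : R) : R := (1 - u ^+ 2 / 12) * (u + 2 * v + u * v ^+ 2 / 12).

Lemma ser_numE u v : ser_num u v = (u + v) * ser_den u v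
  + (u + v) * u * (gap (u + v) / 12 + u * (u + 2 * v) / 6 + u ^+ 2 * v ^+ 2 / 144).
Proof. by rewrite /ser_num /ser_den /gap; field. Qed.

Lemma ser_den_le u v : 0 <= u <= 2 -> 0 <= v <= 2 -> ser_den u v <= 3 * (u + v).
Proof.
move=> /andP[u0 u2] /andP[v0 v2]; rewrite /ser_den.
have v4 : v ^+ 2 <= 4 by nra.
have h1 : u * v ^+ 2 <= 4 * u by nra.
have h2 : 0 <= u * v ^+ 2 by nra.
have h3 : 0 <= u ^+ 2 <= 4 by apply/andP; split; nra.
nra.
Qed.

Lemma ser_den_gt0 u v : 0 <= u <= 2 -> 0 <= v <= 2 -> 0 < u + v -> 0 < ser_den u v.
Proof.
move=> /andP[u0 u2] /andP[v0 v2] uv; rewrite /ser_den.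
apply: mulr_gt0; first nra.
have : 0 <= u * v ^+ 2 / 12 by nra.
lra.
Qed.

Lemma ser_gain u v : 0 <= u <= 2 -> 0 <= v <= 2 -> 0 <= gap (u + v) ->
  (u + v + gap (u + v) * u / 36) * ser_den u v <= ser_num u v.
Proof.
move=> hu hv g0; have hD := ser_den_le hu hv.
move: hu hv => /andP[u0 u2] /andP[v0 v2].
rewrite ser_numE.
set g := gap _ in g0 *; set D := ser_den u v in hD *.
have : g * u * D <= g * u * (3 * (u + v)) by apply: ler_wpM2l => //; exact: mulr_ge0.
have uv0 : 0 <= (u + v) * u by nra.
have P0 : 0 <= u * (u + 2 * v) / 6 + u ^+ 2 * v ^+ 2 / 144 by nra.
have := mulr_ge0 uv0 P0.
lra.
Qed.
End SerialQuetelet.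

Section Alpha.
Variable R : rcfType.

Definition alpha : R := 2 * Num.sqrt 7 - 4.

Lemma gapE x : gap x = (alpha - x) * (alpha + 8 + x).
Proof.
have s7 : Num.sqrt (7 : R) ^+ 2 = 7 by rewrite sqr_sqrtr.
rewrite /gap /alpha; set s := Num.sqrt _ in s7 *.
have -> : (2 * s - 4 - x) * (2 * s - 4 + 8 + x) = 4 * s ^+ 2 - 16 - 8 * x - x ^+ 2 by ring.
rewrite s7; ring.
Qed.

Lemma gap_alpha : gap alpha = 0.
Proof. by rewrite gapE subrr mul0r. Qed.

Lemma alpha_bounds : 1 <= alpha <= 2.
Proof.
have s0 : 0 <= Num.sqrt (7 : R) := sqrtr_ge0 7.
have s7 : Num.sqrt (7 : R) ^+ 2 = 7 by rewrite sqr_sqrtr.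
rewrite /alpha; set s := Num.sqrt _ in s0 s7 *.
apply/andP; split; nra.
Qed.

Lemma gap_ge0 x : 0 <= x -> x <= alpha -> 0 <= gap x.
Proof. by move=> x0 xa; have /andP[a1 _] := alpha_bounds; rewrite gapE mulr_ge0 //; lra. Qed.

Lemma gap_gt0 x : 0 <= x -> x < alpha -> 0 < gap x.
Proof. by move=> x0 xa; have /andP[a1 _] := alpha_bounds; rewrite gapE mulr_gt0 //; lra. Qed.

Lemma ser_alpha u v : 0 <= u <= 2 -> 0 <= v <= 2 -> alpha <= u + v ->
  alpha * ser_den u v <= ser_num u v.
Proof.
move=> /andP[u0 u2] /andP[v0 v2] hs; have /andP[a1 a2] := alpha_bounds.
set a := alpha in a1 a2 hs *.
have cv : 0 <= 2 * (1 - u / 3) - u * a / 12 by nra.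
have -> : ser_num u v = a * ser_den u v
    + (u + v - a) * (v * (2 * (1 - u / 3) - u * a / 12) - u * (u - a) * (8 + a) / 12)
    + a * u ^+ 2 * (u + 2 * v) / 6 + a * u ^+ 3 * v ^+ 2 / 144
    + gap a * u * (2 * (u + v) - a) / 12.
  by rewrite /ser_num /ser_den /gap; field.
rewrite gap_alpha !mul0r addr0.
(* For u > alpha the negative part of the second summand is absorbed by the next two, using
   alpha (8 + alpha) = 12. *)
have [ua|au] := lerP u a.
  have h1 : 0 <= u * (a - u) * (8 + a) by apply: mulr_ge0; [apply: mulr_ge0|]; lra.
  have h2 : 0 <= (u + v - a) * (v * (2 * (1 - u / 3) - u * a / 12) + u * (a - u) * (8 + a) / 12).
    by apply: mulr_ge0; [lra | apply: addr_ge0; [exact: mulr_ge0 | lra]].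
  have h3 : 0 <= a * u ^+ 2 * (u + 2 * v) by apply: mulr_ge0; [apply: mulr_ge0|]; nra.
  have h4 : 0 <= a * u ^+ 3 * v ^+ 2 by apply: mulr_ge0; [apply: mulr_ge0|]; nra.
  nra.
have k1 : (u - a) * (8 + a) <= 4 * a * u.
  have : a * (8 + a) = 12 by move: gap_alpha; rewrite /gap -/a; lra.
  nra.
have k2 : (u - a) ^+ 2 * (8 + a) <= 2 * a * u ^+ 2.
  have : (u - a) ^+ 2 * (8 + a) <= 4 * a * u * (u - a) by nra.
  nra.
have h1 : 0 <= (u + v - a) * (v * (2 * (1 - u / 3) - u * a / 12)).
  by apply: mulr_ge0; [lra | exact: mulr_ge0].
have h2 : 0 <= u * (2 * a * u ^+ 2 - (u - a) ^+ 2 * (8 + a)) by apply: mulr_ge0; lra.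
have h3 : 0 <= u * v * (4 * a * u - (u - a) * (8 + a)).
  by apply: mulr_ge0; [exact: mulr_ge0 | lra].
have h4 : 0 <= a * u ^+ 3 * v ^+ 2 by apply: mulr_ge0; [apply: mulr_ge0|]; nra.
nra.
Qed.

End Alpha.

Arguments alpha {R}.

Section SerialMap.
Variable R : rcfType.

Definition admissible (a e : R) := [/\ 0 < e, e <= 2 * a & e <= 2 * (1 - a)].

Definition quet (a e : R) : R := e / (a * (1 - a)).

Definition ser_a (a e : R) : R := a ^+ 2 - e ^+ 2 / 12.
Definition ser_e (a e : R) : R := 2 * a * e - 2 * e ^+ 2 / 3.

Definition minc (x : R) : R := Num.min x (1 - x).

Lemma admissible_gt0 a e : admissible a e -> 0 < a /\ 0 < 1 - a.
Proof. by case=> e0 ea eb; split; lra. Qed.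

Lemma admissible1B a e : admissible a e -> admissible (1 - a) e.
Proof. by case=> e0 ea eb; split; lra. Qed.

Lemma quet1B a e : quet (1 - a) e = quet a e.
Proof. by rewrite /quet opprB addrCA subrr addr0 (mulrC (1 - a)). Qed.

Lemma minc1B x : minc (1 - x) = minc x.
Proof. by rewrite /minc opprB addrCA subrr addr0 minC. Qed.

Lemma admissible_minc a e : admissible a e -> e / 2 <= minc a.
Proof. by case=> _ ea eb; rewrite /minc le_min; apply/andP; split; lra. Qed.

Lemma admissible_sym x y e : x = y \/ x = 1 - y -> admissible y e -> admissible x e.
Proof. by case=> -> // /admissible1B. Qed.

Lemma quet_minc1B x y e : x = y \/ x = 1 - y -> quet x e = quet y e /\ minc x = minc y.
Proof. by case=> ->; rewrite ?quet1B ?minc1B. Qed.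

Lemma admissible_uv a e : admissible a e ->
  0 <= e / a <= 2 /\ 0 <= e / (1 - a) <= 2.
Proof.
move=> h; have [a0 b0] := admissible_gt0 h; case: h => e0 ea eb.
have d1 : e / a <= 2 by rewrite ler_pdivrMr //; lra.
have d2 : e / (1 - a) <= 2 by rewrite ler_pdivrMr //; lra.
by rewrite d1 d2 !divr_ge0 // ltW.
Qed.

Lemma quet_gt0 a e : admissible a e -> 0 < quet a e.
Proof.
move=> h; have [a0 b0] := admissible_gt0 h; case: h => e0 _ _.
by rewrite divr_gt0 // mulr_gt0.
Qed.

Lemma quet_uv a e : admissible a e -> quet a e = e / a + e / (1 - a).
Proof.
move=> /admissible_gt0[a0 b0]; rewrite /quet.
by field; rewrite !gt_eqF.
Qed.

Lemma admissible_ser a e : admissible a e -> admissible (ser_a a e) (ser_e a e).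
Proof.
case=> e0 ea eb; rewrite /ser_a /ser_e; split.
- have : 0 < e * (2 * a - 2 * e / 3) by apply: mulr_gt0 => //; lra.
  lra.
- have : 0 <= (2 * a - e) ^+ 2 by exact: sqr_ge0.
  lra.
- have : 0 <= (2 * (1 - a) - e) * (2 * a + e / 3) by apply: mulr_ge0; lra.
  nra.
Qed.

Lemma ser_e_ge a e : admissible a e -> e ^+ 2 / 3 <= ser_e a e.
Proof.
case=> e0 ea _; rewrite /ser_e.
have : 0 <= e * (2 * a - e) by apply: mulr_ge0; lra.
lra.
Qed.

Lemma quet_ser a e : admissible a e ->
  quet (ser_a a e) (ser_e a e) = ser_num (e / a) (e / (1 - a)) / ser_den (e / a) (e / (1 - a)).
Proof.
move=> h; have [a0 b0] := admissible_gt0 h; have [a10 b10] := admissible_gt0 (admissible_ser h).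
case: h => e0 _ _; move: a10 b10.
rewrite /quet /ser_a /ser_e /ser_num /ser_den => a10 b10.
field; apply/and5P; split; rewrite gt_eqF //; nra.
Qed.

Lemma quet_ser_gain a e : admissible a e -> quet a e <= alpha ->
  quet a e + gap (quet a e) * (e / a) / 36 <= quet (ser_a a e) (ser_e a e).
Proof.
move=> h Qa; have [hu hv] := admissible_uv h; have Q0 := quet_gt0 h.
rewrite quet_ser // quet_uv // in Qa Q0 *.
have g0 : 0 <= gap (e / a + e / (1 - a)) by rewrite gap_ge0 // ltW.
by rewrite ler_pdivlMr ?ser_den_gt0 // ser_gain.
Qed.

Lemma quet_ser_ge_min a e : admissible a e ->
  Num.min (quet a e) alpha <= quet (ser_a a e) (ser_e a e).
Proof.
move=> h; have [hu hv] := admissible_uv h; have Q0 := quet_gt0 h.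
have [Qa|aQ] := leP (quet a e) alpha.
  apply: le_trans (quet_ser_gain h Qa); rewrite lerDl.
  have g0 : 0 <= gap (quet a e) by rewrite gap_ge0 // ltW.
  by case/andP: hu => u0 _; apply: divr_ge0 => //; apply: mulr_ge0.
rewrite quet_uv // in Q0 aQ.
by rewrite quet_ser // ler_pdivlMr ?ser_den_gt0 // ser_alpha // ltW.
Qed.

Lemma ser_slow a e : admissible a e -> 1 - a < 1 / 6 ->
  3 / 2 * (1 - a) <= 1 - ser_a a e /\ 1 / 6 <= ser_a a e.
Proof.
case=> e0 _ eb hb; rewrite /ser_a.
have e2 : e ^+ 2 <= 1 / 9 by nra.
split; nra.
Qed.

Lemma ser_progress a e : admissible a e -> quet a e <= alpha ->
  quet a e * (1 + gap (quet a e) / 216) <= quet (ser_a a e) (ser_e a e) \/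
  [/\ minc a < 1 / 6, quet a e <= quet (ser_a a e) (ser_e a e)
     & Num.min (3 / 2 * minc a) (1 / 6) <= minc (ser_a a e)].
Proof.
move=> h Qa; have gain := quet_ser_gain h Qa.
have [a0 b0] := admissible_gt0 h; have Q0 := quet_gt0 h.
have u_eq : e / a = quet a e * (1 - a) by rewrite /quet; field; rewrite !gt_eqF.
rewrite u_eq in gain; set Q := quet a e in Qa Q0 gain *.
have g0 : 0 <= gap Q by rewrite gap_ge0 // ltW.
have [hb|hb] := leP (1 / 6) (1 - a).
  left; apply: le_trans gain.
  have : gap Q * Q * (1 / 6) <= gap Q * Q * (1 - a).
    by apply: ler_wpM2l => //; exact: mulr_ge0 g0 (ltW Q0).
  lra.
right; have [s1 s2] := ser_slow h hb.
have ma : minc a <= 1 - a by rewrite /minc ge_min lexx orbT.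
split; first lra.
  by have := mulr_ge0 g0 (mulr_ge0 (ltW Q0) (ltW b0)); lra.
have m1 : Num.min (3 / 2 * minc a) (1 / 6) <= 1 / 6 by rewrite ge_min lexx orbT.
have m2 : Num.min (3 / 2 * minc a) (1 / 6) <= 3 / 2 * minc a by rewrite ge_min lexx.
by rewrite [minc (ser_a _ _)]/minc le_min; apply/andP; split; lra.
Qed.
End SerialMap.

Section BalancedTEC.
Variable R : realType.
Implicit Types V C : tec R.

Definition nondeg V := [/\ valid_tec V, balanced V & 0 < tq V].

Definition tec_m V := minc (tec_H V).

Definition child V C := C = serial_child V \/ C = parallel_child V.

Lemma descendant0 V X : descendant V 0 X -> X = V.
Proof. by move=> h; inversion h. Qed.

Lemma tec_E_balanced V : balanced V -> tec_E V = 3 * tq V.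
Proof. by case: V => p q r s t; rewrite /balanced /tec_E /= => -[<- <-]; ring. Qed.

Lemma nondegP V : balanced V -> tp V + tq V + tr V + ts V + tt V = 1 ->
  nondeg V <-> admissible (tec_H V) (tec_E V).
Proof.
case: V => p q r s t; rewrite /nondeg /valid_tec /balanced /admissible /tec_H /tec_E /=.
move=> [qr rs] sum1; subst r s; split.
  by case=> -[p0 [_ [_ [_ [t0 _]]]]] _ q0; split; lra.
by case=> e0 ea eb; split; [do ?split | | ]; lra.
Qed.

Lemma child_balanced V C : balanced V -> child V C ->
  balanced C /\ tp C + tq C + tr C + ts C + tt C = 1.
Proof.
case: V => p q r s t; rewrite /balanced /= => -[<- <-].
by case=> ->; rewrite /balanced /=; (split; [split; ring | ring]).
Qed.

Lemma child_coords V C : nondeg V -> child V C -> exists a,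
  [/\ a = tec_H V \/ a = 1 - tec_H V,
      tec_H C = ser_a a (tec_E V) \/ tec_H C = 1 - ser_a a (tec_E V)
    & tec_E C = ser_e a (tec_E V)].
Proof.
case: V => p q r s t; rewrite /nondeg /valid_tec /balanced /tec_H /tec_E /ser_a /ser_e /=.
case=> -[_ [_ [_ [_ [_ sum1]]]]] [qr rs] _; subst r s.
have -> : p = 1 - 3 * q - t by lra.
case=> ->.
  by exists (1 - ((q + q + q) / 2 + t)); split; [right | right | ] => //=; field.
by exists ((q + q + q) / 2 + t); split; [left | left | ] => //=; field.
Qed.

Lemma nondeg_admissible V : nondeg V -> admissible (tec_H V) (tec_E V).
Proof. by move=> nV; case: (nV) => -[_ [_ [_ [_ [_ sum1]]]]] bal _; apply/nondegP. Qed.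

Lemma nondeg_child V C : nondeg V -> child V C -> nondeg C.
Proof.
move=> nV hc; have [_ bal _] := nV; have [balC sumC] := child_balanced bal hc.
have [a [ha hH hE]] := child_coords nV hc.
have adm := admissible_ser (admissible_sym ha (nondeg_admissible nV)).
by apply/nondegP => //; rewrite hE; apply: admissible_sym hH adm.
Qed.

Lemma tq_child V C : nondeg V -> child V C -> tq V ^+ 2 <= tq C.
Proof.
move=> nV hc; have [_ bal _] := nV; have [_ balC _] := nondeg_child nV hc.
have [a [ha _ hE]] := child_coords nV hc.
have := ser_e_ge (admissible_sym ha (nondeg_admissible nV)).
by rewrite -hE !tec_E_balanced // => ?; nra.
Qed.

Lemma tq_le_tec_m V : nondeg V -> 3 / 2 * tq V <= tec_m V.
Proof.
move=> nV; have [_ bal _] := nV; have := admissible_minc (nondeg_admissible nV).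
by rewrite tec_E_balanced // /tec_m => ?; lra.
Qed.

Lemma child_quet_minc V C : nondeg V -> child V C -> exists a,
  [/\ admissible a (tec_E V), quet a (tec_E V) = tec_Q V, minc a = tec_m V,
      quet (ser_a a (tec_E V)) (ser_e a (tec_E V)) = tec_Q C
    & minc (ser_a a (tec_E V)) = tec_m C].
Proof.
move=> nV hc; have [a [ha hH hE]] := child_coords nV hc.
have [Qa ma] := quet_minc1B (tec_E V) ha; have [QC mC] := quet_minc1B (tec_E C) hH.
exists a; split => //; first exact: admissible_sym ha (nondeg_admissible nV).
by rewrite -hE -QC.
Qed.

Lemma quet_child_ge_min V C : nondeg V -> child V C -> Num.min (tec_Q V) alpha <= tec_Q C.
Proof.
by move=> nV hc; have [a [adm <- _ <- _]] := child_quet_minc nV hc; exact: quet_ser_ge_min.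
Qed.

Lemma child_progress V C : nondeg V -> child V C -> tec_Q V <= alpha ->
  tec_Q V * (1 + gap (tec_Q V) / 216) <= tec_Q C \/
  [/\ tec_m V < 1 / 6, tec_Q V <= tec_Q C & Num.min (3 / 2 * tec_m V) (1 / 6) <= tec_m C].
Proof.
by move=> nV hc; have [a [adm <- <- <- <-]] := child_quet_minc nV hc; exact: ser_progress.
Qed.

Lemma nondeg_quet_gt0 V : valid_tec V -> balanced V -> 0 < tec_Q V -> nondeg V.
Proof.
move=> val bal Q0; split => //; rewrite lt_def; case: (val) => _ [-> _]; rewrite andbT.
by apply: contraTneq Q0 => q0; rewrite /tec_Q tec_E_balanced // q0 mulr0 mul0r ltxx.
Qed.

Lemma descendantSn V k X : descendant V k.+1 X -> exists2 C, child V C & descendant C k X.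
Proof.
suff gen : forall n Y, descendant V n Y -> forall m, n = m.+1 ->
  exists2 C, child V C & descendant C m Y by move/gen; apply.
move=> n Y; elim=> {n Y} [//|n Y hY IH|n Y hY IH] [|m] [en]; subst n.
- by rewrite (descendant0 hY); exists (serial_child V); [left | exact: desc0].
- by have [C hc hCY] := IH m erefl; exists C => //; exact: descS.
- by rewrite (descendant0 hY); exists (parallel_child V); [right | exact: desc0].
- by have [C hc hCY] := IH m erefl; exists C => //; exact: descP.
Qed.

Lemma descendant_quet_ge V (theta : R) k X : nondeg V -> theta <= alpha -> theta <= tec_Q V ->
  descendant V k X -> nondeg X /\ theta <= tec_Q X.
Proof.
move=> nV tha thV; elim=> {k X} [//|n Y _ [nY thY]|n Y _ [nY thY]].
- have hc : child Y (serial_child Y) by left.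
  split; first exact: nondeg_child nY hc.
  by apply: le_trans (quet_child_ge_min nY hc); rewrite le_min thY.
- have hc : child Y (parallel_child Y) by right.
  split; first exact: nondeg_child nY hc.
  by apply: le_trans (quet_child_ge_min nY hc); rewrite le_min thY.
Qed.
End BalancedTEC.

Section Escape.
Variables (R : realType) (theta : R).
Hypothesis theta_lt_alpha : theta < alpha.
Implicit Types (V C X : tec R) (P : tec R -> Prop).

Definition gain_rate : R := 1 + gap theta / 216.

Definition eventually_quet_ge (nu : R) P := exists M : nat,
  forall V, nondeg V -> nu <= tq V -> P V ->
  forall k X, (M <= k)%N -> descendant V k X -> theta <= tec_Q X.

Lemma eventually_quet_ge_mono nu P P' :
  (forall V, nondeg V -> nu <= tq V -> P V -> P' V) ->
  eventually_quet_ge nu P' -> eventually_quet_ge nu P.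
Proof. by move=> PP' [M HM]; exists M => V nV hnu /(PP' V nV hnu); apply: HM. Qed.

Lemma eventually_quet_ge_or nu P P' :
  eventually_quet_ge nu P -> eventually_quet_ge nu P' ->
  eventually_quet_ge nu (fun V => P V \/ P' V).
Proof.
move=> [M HM] [M' HM']; exists (maxn M M') => V nV hnu [hP|hP'] k X hk.
  by apply: (HM V nV hnu hP k X); rewrite (leq_trans (leq_maxl M M')).
by apply: (HM' V nV hnu hP' k X); rewrite (leq_trans (leq_maxr M M')).
Qed.

Lemma eventually_quet_ge_child nu P P' : 0 <= nu ->
  (forall V C, nondeg V -> child V C -> P V -> tec_Q V < theta -> P' C) ->
  eventually_quet_ge (nu ^+ 2) P' -> eventually_quet_ge nu P.
Proof.
move=> nu0 step [M HM]; exists M.+1 => V nV hnu hP [//|k] X hk hX.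
have [thV|Vth] := leP theta (tec_Q V).
  exact: (descendant_quet_ge nV (ltW theta_lt_alpha) thV hX).2.
have [C hc hCX] := descendantSn hX.
apply: (HM C (nondeg_child nV hc) _ (step V C nV hc hP Vth) k X hk hCX).
by apply: le_trans (tq_child nV hc); rewrite lerXn2r ?nnegrE // (le_trans nu0).
Qed.

Lemma eventually_quet_ge0 nu : eventually_quet_ge nu (fun V => theta <= tec_Q V).
Proof.
exists 0%N => V nV _ thV k X _ hX.
exact: (descendant_quet_ge nV (ltW theta_lt_alpha) thV hX).2.
Qed.

Lemma child_budget V C j r : nondeg V -> child V C -> tec_Q V < theta ->
  theta <= tec_Q V * gain_rate ^+ j.+1 -> 1 / 6 <= (3 / 2) ^+ r * tec_m V ->
  theta <= tec_Q C * gain_rate ^+ j \/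
  [/\ (0 < r)%N, theta <= tec_Q C * gain_rate ^+ j.+1 & 1 / 6 <= (3 / 2) ^+ r.-1 * tec_m C].
Proof.
move=> nV hc Vth thV hm; have Q0 : 0 < tec_Q V := quet_gt0 (nondeg_admissible nV).
have th0 := lt_trans Q0 Vth.
have g0 : 0 <= gap theta := ltW (gap_gt0 (ltW th0) theta_lt_alpha).
have c0 : 0 <= gain_rate by rewrite /gain_rate; lra.
have gap_le : gap theta <= gap (tec_Q V) by rewrite /gap; nra.
case: (child_progress nV hc (ltW (lt_trans Vth theta_lt_alpha))) => [gain|[mV QVC mC]].
  left; apply: (le_trans thV); rewrite exprS mulrA; apply: ler_wpM2r; first exact: exprn_ge0.
  by apply: le_trans gain; rewrite /gain_rate; apply: ler_wpM2l; [exact: ltW | lra].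
case: r hm => [|r] hm; first by rewrite expr0 mul1r in hm; lra.
right; split => //.
  by apply: (le_trans thV); apply: ler_wpM2r => //; exact: exprn_ge0.
have pw : 0 <= (3 / 2 : R) ^+ r by apply: exprn_ge0; lra.
have [le32|] := leP (3 / 2 * tec_m V) (1 / 6).
  rewrite min_l // in mC; rewrite exprSr -mulrA in hm.
  by apply: (le_trans hm); apply: ler_wpM2l.
move=> /ltW le16; rewrite min_r // in mC.
have : 1 <= (3 / 2 : R) ^+ r by rewrite exprn_ege1 //; lra.
nra.
Qed.

Lemma eventually_quet_ge_budget j r nu : 0 < nu ->
  (forall nu, 0 < nu -> eventually_quet_ge nu (fun V => theta <= tec_Q V * gain_rate ^+ j)) ->
  eventually_quet_ge nu (fun V => theta <= tec_Q V * gain_rate ^+ j.+1 /\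
                                   1 / 6 <= (3 / 2) ^+ r * tec_m V).
Proof.
move=> + IHj; elim: r nu => [|r IHr] nu nu0; have nu20 : 0 < nu ^+ 2 by rewrite exprn_gt0.
  apply: eventually_quet_ge_child (ltW nu0) _ (IHj _ nu20) => V C nV hc [thV hm] Vth.
  by case: (child_budget nV hc Vth thV hm) => // -[].
apply: eventually_quet_ge_child (ltW nu0) _ (eventually_quet_ge_or (IHj _ nu20) (IHr _ nu20)).
move=> V C nV hc [thV hm] Vth.
by case: (child_budget nV hc Vth thV hm) => [|[_ ? ?]]; [left | right].
Qed.

Lemma eventually_quet_ge_power j nu : 0 < nu ->
  eventually_quet_ge nu (fun V => theta <= tec_Q V * gain_rate ^+ j).
Proof.
elim: j nu => [|j IHj] nu nu0.
  by apply: eventually_quet_ge_mono (eventually_quet_ge0 nu) => V _ _; rewrite expr0 mulr1.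
have [r hr] : exists r, 1 / (6 * nu) <= (3 / 2 : R) ^+ r by apply: expr_unbounded; lra.
apply: eventually_quet_ge_mono (eventually_quet_ge_budget r nu0 IHj) => V nV hnu thV.
split => //; have := tq_le_tec_m nV.
rewrite ler_pdivrMr ?mulr_gt0 // in hr.
have : 0 <= (3 / 2 : R) ^+ r by apply: exprn_ge0; lra.
nra.
Qed.
End Escape.

Theorem mainTheorem8 (R : realType) (eps : R) (W : tec R) :
  0 < eps -> valid_tec W -> balanced W -> 0 < tec_Q W ->
  exists m : nat, (0 < m)%N /\
    forall (n : nat) (W' : tec R), (m <= n)%N -> descendant W n W' ->
      2 * Num.sqrt 7 - 4 - eps <= tec_Q W'.
Proof.
move=> eps0 val bal Q0; have nW := nondeg_quet_gt0 val bal Q0.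
have /andP[a1 _] : 1 <= (alpha : R) <= 2 := alpha_bounds R.
pose theta := alpha - Num.min eps alpha / 2.
have [m_eps m_al] : Num.min eps alpha <= eps /\ Num.min eps alpha <= alpha.
  by rewrite !ge_min !lexx orbT.
have m0 : 0 < Num.min eps alpha by rewrite lt_min eps0 /=; lra.
have th_lt : theta < alpha by rewrite /theta; lra.
have rate_gt1 : 1 < gain_rate theta.
  have : 0 < gap theta by apply: gap_gt0 th_lt; rewrite /theta; lra.
  by rewrite /gain_rate; lra.
have [j hj] := expr_unbounded (theta / tec_Q W) rate_gt1.
rewrite ler_pdivrMr // mulrC in hj.
have [_ _ q0] := nW; have [M HM] := eventually_quet_ge_power th_lt j q0.
exists M.+1; split => // n W' hn hW'.
have := HM W nW (lexx _) hj n W' (ltnW hn) hW'.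
rewrite /theta /alpha; lra.
Qed.
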